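(* In the setting below, the subgroup $H_M$ contains the commutator subgroup $[G_M,G_M]$, and the quotient $H_M/[G_M,G_M]$ is finite.
   Context: Let $n\ge 1$ and let $M=(m_{ij})\in SL(2n+1,\mathbb Z)$. Assume that $M$ has exactly one real eigenvalue $\alpha$, that $\alpha>0$, $\alpha\neq 1$, that $\alpha$ is a simple eigenvalue, and that the remaining eigenvalues are $\beta_1,\dots,\beta_k,\bar\beta_1,\dots,\bar\beta_k$ with $\mathrm{Im}\,\beta_j>0$. Let $W\subset\mathbb C^{2n+1}$ be the direct sum of the generalized eigenspaces of $M$ for $\beta_1,\dots,\beta_k$ (so $\dim_{\mathbb C}W=n$). Fix a real eigenvector $a=(a^{(1)},\dots,a^{(2n+1)})^\top\in\mathbb R^{2n+1}$ of $M$ for $\alpha$ and a basis $b_1,\dots,b_n$ of $W$, $b_j=(b_j^{(1)},\dots,b_j^{(2n+1)})^\top$, and let $R=(r_{\ell j})\in M_n(\mathbb C)$ be given by $Mb_j=\sum_{\ell=1}^n r_{\ell j}b_\ell$. For $i=1,\dots,2n+1$ put $u_i=(a^{(i)},b_1^{(i)},\dots,b_n^{(i)})^\top\in\mathbb R\times\mathbb C^n$. Let $\mathbb H=\{w\in\mathbb C:\mathrm{Im}\,w>0\}$, and define holomorphic automorphisms of $\mathbb H\times\mathbb C^n$ by $g_0(w,z)=(\alpha w,R^\top z)$ and $g_i(w,z)=(w,z)+u_i$ for $1\le i\le 2n+1$. Let $G_M$ be the group generated by $g_0,\dots,g_{2n+1}$ and $H_M$ the subgroup generated by $g_1,\dots,g_{2n+1}$.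 *)

From HB Require Import structures.
From mathcomp Require Import all_boot all_order all_algebra.
From mathcomp Require Import complex.
From mathcomp Require Import reals.
Set Implicit Arguments. Unset Strict Implicit. Unset Printing Implicit Defensive.
Import Order.TTheory GRing.Theory Num.Theory.
Local Open Scope ring_scope.
Local Open Scope complex_scope.

Inductive gen_grp (T : Type) (S : (T -> T) -> Prop) : (T -> T) -> Prop :=
| gen_grp_id : gen_grp S id
| gen_grp_in f : S f -> gen_grp S f
| gen_grp_comp f g : gen_grp S f -> gen_grp S g -> gen_grp S (f \o g)
| gen_grp_inv f g : gen_grp S f -> cancel f g -> cancel g f -> gen_grp S g.

Definition commutator_grp (T : Type) (G : (T -> T) -> Prop) : (T -> T) -> Prop :=
  gen_grp (fun c => exists f g fi gi, [/\ G f, G g,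
             [/\ cancel f fi, cancel fi f, cancel g gi & cancel gi g]
             & c = fi \o gi \o f \o g]).

Section Setting.
Variable R : realType.
Local Notation C := R[i].

Definition UHP := {w : C | 0 < complex.Im w}.
Definition Xsp (n : nat) := (UHP * 'cV[C]_n)%type.

Lemma UHP_scale (al : R) (w : UHP) : 0 < al -> 0 < complex.Im (al%:C * val w).
Proof.
move=> hal; case: w => [[x y]] /= hy.
rewrite /= mul0r addr0; exact: mulr_gt0.
Qed.

Lemma UHP_shift (t : R) (w : UHP) : 0 < complex.Im (val w + t%:C).
Proof. by case: w => [[x y]] /= hy; rewrite addr0. Qed.

Definition g0 (n : nat) (al : R) (hal : 0 < al) (Rm : 'M[C]_n) : Xsp n -> Xsp n :=
  fun p => (exist _ (al%:C * val p.1) (UHP_scale p.1 hal), Rm^T *m p.2).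

Definition gi (m n : nat) (a : 'cV[R]_m) (b : 'M[C]_(m, n)) (i : 'I_m)
  : Xsp n -> Xsp n :=
  fun p => (exist _ (val p.1 + (a i 0)%:C) (UHP_shift (a i 0) p.1),
            p.2 + (row i b)^T).

Definition gen_eigvec (m : nat) (A : 'M[C]_m) (be : C) (v : 'cV[C]_m) : Prop :=
  exists k : nat, (A - be%:M) ^+ k *m v = 0.

(* W = direct sum of the generalized eigenspaces of A for the eigenvalues
   with positive imaginary part: v is a finite sum of generalized eigenvectors
   for such eigenvalues. *)
Definition inW (m : nat) (A : 'M[C]_m) (v : 'cV[C]_m) : Prop :=
  exists (k : nat) (bes : 'I_k -> C) (vs : 'I_k -> 'cV[C]_m),
    (forall j, [/\ eigenvalue A (bes j), 0 < complex.Im (bes j) & gen_eigvec A (bes j) (vs j)])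
    /\ v = \sum_(j < k) vs j.

End Setting.

From HB Require Import structures.
From mathcomp Require Import all_boot all_order all_algebra.
From mathcomp Require Import complex.
From mathcomp Require Import reals.
From mathcomp Require Import boolp zify.
Import Order.TTheory GRing.Theory Num.Theory.
Local Open Scope ring_scope.
Local Open Scope complex_scope.

(* Write T_k for the translation by the lattice point k ∈ Z^(2n+1), so that
   H_M = {T_k} and g_0 T_k = T_(M^T k) g_0.  Every element f of G_M then
   satisfies g_0^q f = T_k g_0^p for some k, p, q, and the exponent p - q is
   additive under composition; hence commutators have exponent 0 and are
   translations.  Conversely, the commutator of T_v and g_0^-1 is
   T_((M^T - 1) v), and M^T - 1 is nonsingular because 1 is not an eigenvalue
   of M, so its image is a sublattice of finite index of Z^(2n+1). *)

Set Implicit Arguments. Unset Strict Implicit. Unset Printing Implicit Defensive.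

Section Translations.
Variables (X : Type) (V : zmodType) (T : V -> X -> X).
Hypotheses (T0 : T 0 = id) (TD : forall u v, T (u + v) = T u \o T v).

Lemma TK v : cancel (T v) (T (- v)).
Proof. by move=> x; rewrite -[T (- v) _]/((T (- v) \o T v) x) -TD addNr T0. Qed.

Lemma TNK v : cancel (T (- v)) (T v).
Proof. by move=> x; have := TK (- v) x; rewrite opprK. Qed.

Lemma gen_grp_translation (S : (X -> X) -> Prop) :
  (forall f, S f -> exists v, f = T v) ->
  forall f, gen_grp S f -> exists v, f = T v.
Proof.
move=> ST f; elim=> {f} [|f /ST //|f g _ [u ->] _ [v ->]|f g _ [v ->] vK gK].
- by exists 0; rewrite T0.
- by exists (u + v); rewrite TD.
- by exists (- v); apply: funext => x; rewrite -{1}(TNK v x) vK.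
Qed.

Lemma gen_grp_T_sum (S : (X -> X) -> Prop) (I : finType) (e : I -> V) :
  (forall i, gen_grp S (T (e i))) ->
  forall z : I -> int, gen_grp S (T (\sum_i e i *~ z i)).
Proof.
move=> Se z; apply: (big_ind (fun v => gen_grp S (T v))).
- by rewrite T0; apply: gen_grp_id.
- by move=> u v Su Sv; rewrite TD; apply: gen_grp_comp.
move=> i _; have Sn k : gen_grp S (T (e i *+ k)).
  elim: k => [|k IHk]; first by rewrite mulr0n T0; apply: gen_grp_id.
  by rewrite mulrS TD; apply: gen_grp_comp.
case: (z i) => k; first exact: Sn.
by rewrite NegzE mulrNz; apply: gen_grp_inv (Sn _) (TK _) (TNK _).
Qed.

Section Twisted.
Variables (P : X -> X) (phi psi : V -> V).
Hypotheses (PT : forall v x, P (T v x) = T (phi v) (P x)) (psiK : cancel psi phi)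
  (P_inj : injective P).

Lemma iterP_T p v x : iter p P (T v x) = T (iter p phi v) (iter p P x).
Proof. by elim: p => //= p ->; rewrite PT. Qed.

Lemma T_iterP p v x : T v (iter p P x) = iter p P (T (iter p psi v) x).
Proof.
suff psi_iterK : iter p phi (iter p psi v) = v by rewrite iterP_T psi_iterK.
by elim: p v => //= p IHp v; rewrite -[psi _]iterS iterSr IHp psiK.
Qed.

Definition normal_form f k p q := forall x, iter q P (f x) = T k (iter p P x).

Lemma normal_form_comp f g k l p q p' q' :
  normal_form f k p q -> normal_form g l p' q' ->
  normal_form (f \o g) (iter q' phi k + iter p phi l) (p + p') (q + q').
Proof.
move=> fk gl x /=.
by rewrite addnC iterD fk iterP_T TD /= -iterD addnC iterD gl iterP_T -iterD.
Qed.

Lemma normal_form_inv f g k p q :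
  normal_form f k p q -> cancel g f -> normal_form g (- k) q p.
Proof. by move=> fk gK x; rewrite -[in RHS](gK x) fk TK. Qed.

Lemma normal_form_translation f k p :
  normal_form f k p p -> f = T (iter p psi k).
Proof.
have iterP_inj q : injective (iter q P) by elim: q => //= q IHq x y /P_inj/IHq.
by move=> fk; apply: funext => x; apply: (iterP_inj p); rewrite fk T_iterP.
Qed.

Variable S : (X -> X) -> Prop.
Hypothesis S_normal : forall f, S f -> exists k p q, normal_form f k p q.

Lemma gen_grp_normal_form f : gen_grp S f -> exists k p q, normal_form f k p q.
Proof.
elim=> {f} [|f /S_normal //|f g _ [k [p [q fk]]] _ [l [p' [q' gl]]]|].
- by exists 0, 0%N, 0%N => x; rewrite T0.
- by exists (iter q' phi k + iter p phi l), (p + p')%N, (q + q')%N;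
    apply: normal_form_comp.
- move=> f g _ [k [p [q fk]]] _ gK.
  by exists (- k), q, p; apply: normal_form_inv.
Qed.

Lemma commutator_translation c :
  commutator_grp (gen_grp S) c -> exists k, c = T k.
Proof.
apply: gen_grp_translation => _ [f [g [fi [gi [Gf Gg [_ fiK _ giK] ->]]]]].
have [k1 [p1 [q1 fk]]] := gen_grp_normal_form Gf.
have [k2 [p2 [q2 gk]]] := gen_grp_normal_form Gg.
have := normal_form_comp (normal_form_comp (normal_form_comp
          (normal_form_inv fk fiK) (normal_form_inv gk giK)) fk) gk.
have -> : (p1 + p2 + q1 + q2 = q1 + q2 + p1 + p2)%N by lia.
by move/normal_form_translation => ->; eexists.
Qed.

Lemma commutator_T_phi (Pi : X -> X) :
  gen_grp S P -> cancel P Pi -> cancel Pi P -> (forall v, gen_grp S (T v)) ->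
  forall v, commutator_grp (gen_grp S) (T (phi v - v)).
Proof.
move=> SP PK PiK ST v; apply: gen_grp_in.
exists (T v), Pi, (T (- v)), P; split.
- exact: ST.
- exact: gen_grp_inv SP PK PiK.
- by split; [exact: TK | exact: TNK | exact: PiK | exact: PK].
- by apply: funext => x /=; rewrite PT PiK addrC TD.
Qed.

End Twisted.
End Translations.

Lemma gen_grp_lattice_translation X m (T : 'cV[int]_m -> X -> X)
    (S : (X -> X) -> Prop) :
  T 0 = id -> (forall u v, T (u + v) = T u \o T v) ->
  (forall i, S (T (delta_mx i 0))) -> forall k, gen_grp S (T k).
Proof.
move=> T0 TD Se k; rewrite (matrix_sum_delta k).
under eq_bigr => i _ do rewrite big_ord1 -[k i 0]intz scaler_int.
by apply: gen_grp_T_sum => // i; apply: gen_grp_in.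
Qed.

Lemma int_mx_image_finite_index m (D : 'M[int]_m) : \det D != 0 ->
  exists K (r : 'I_K -> 'cV[int]_m), forall k, exists j e, k = r j + D *m e.
Proof.
set d := \det D => d_neq0.
exists #|{ffun 'I_m -> 'I_`|d|%N}|.
exists (fun j =>
  \col_i ((@enum_val {ffun 'I_m -> 'I_`|d|%N} _ j) i : nat)%:Z) => k.
have mod_lt i : (`|(k i ord0 %% d)%Z| < `|d|)%N.
  by rewrite -ltz_nat gez0_abs ?modz_ge0 // abszE ltz_mod.
exists (enum_rank [ffun i => Ordinal (mod_lt i)]).
exists (\adj D *m \col_i (k i ord0 %/ d)%Z).
rewrite mulmxA mul_mx_adj mul_scalar_mx enum_rankK.
apply/matrixP => i j; rewrite ord1 !mxE ffunE /= gez0_abs ?modz_ge0 //.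
by rewrite addrC mulrC -divz_eq.
Qed.

Lemma int_mx_det_subr1_neq0 (F : numFieldType) m (M : 'M[int]_m) :
  ~~ eigenvalue (map_mx (fun x : int => x%:~R : F) M) 1 ->
  \det (M - 1%:M) != 0.
Proof.
apply: contra => /eqP detM1; apply/eigenvalueP.
have /det0P [v v_neq0] : \det (map_mx (fun x : int => x%:~R : F) (M - 1%:M)) == 0.
  by rewrite (det_map_mx (intr : {rmorphism int -> F})) detM1.
rewrite (map_mxB (intr : {rmorphism int -> F})).
rewrite (map_mx1 (intr : {rmorphism int -> F})) mulmxBr mulmx1.
by move/eqP; rewrite subr_eq0 => /eqP vM; exists v; rewrite ?scale1r.
Qed.

Lemma intertwined_unitmx (F : fieldType) m n (A : 'M[F]_m) (b : 'M[F]_(m, n))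
    (B : 'M[F]_n) :
  A \in unitmx -> (forall c : 'cV_n, b *m c = 0 -> c = 0) -> A *m b = b *m B ->
  B \in unitmx.
Proof.
move=> A_unit b_inj AbB; rewrite -unitmx_tr -row_free_unit.
apply: inj_row_free => v vB0; apply: trmx_inj; rewrite trmx0; apply: b_inj.
rewrite -(mulKmx A_unit (b *m v^T)) [A *m _]mulmxA AbB -mulmxA.
by rewrite -[B]trmxK -trmx_mul vB0 trmx0 !mulmx0.
Qed.

Section Action.
Variables (R : realType) (m n : nat) (a : 'cV[R]_m) (b : 'M[R[i]]_(m, n)).

Lemma Xsp_ext (p q : Xsp R n) : val p.1 = val q.1 -> p.2 = q.2 -> p = q.
Proof.
case: p q => [[w hw] z] [[w' hw'] z'] /= ew <-; subst w'.
by congr pair; congr exist; apply: bool_irrelevance.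
Qed.

Definition lattice_shift (k : 'cV[int]_m) (p : Xsp R n) : Xsp R n :=
  let kR := map_mx (fun x : int => x%:~R : R) k in
  (exist _ (val p.1 + ((a^T *m kR) 0 0)%:C) (UHP_shift ((a^T *m kR) 0 0) p.1),
   p.2 + b^T *m map_mx (fun x : int => x%:~R : R[i]) k).

Lemma lattice_shift0 : lattice_shift 0 = id.
Proof.
by apply: funext => p; apply: Xsp_ext; rewrite /= map_mx0 mulmx0 ?mxE addr0.
Qed.

Lemma lattice_shiftD u v :
  lattice_shift (u + v) = lattice_shift u \o lattice_shift v.
Proof.
apply: funext => p; apply: Xsp_ext => /=.
  by rewrite map_mxD mulmxDr mxE rmorphD addrA addrAC.
by rewrite map_mxD mulmxDr addrA addrAC.
Qed.

Lemma lattice_shift_delta i : lattice_shift (delta_mx i 0) = gi a b i.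
Proof.
apply: funext => p; apply: Xsp_ext => /=.
  by rewrite map_delta_mx -colE !mxE.
by rewrite map_delta_mx -colE tr_row.
Qed.

Local Notation H_M := (gen_grp (fun f => exists i, f = gi a b i)).

Lemma H_M_lattice_shiftE h : H_M h <-> exists k, h = lattice_shift k.
Proof.
split=> [|[k ->]].
  apply: (gen_grp_translation lattice_shift0 lattice_shiftD) => _ [i ->].
  by exists (delta_mx i 0); rewrite lattice_shift_delta.
apply: gen_grp_lattice_translation lattice_shift0 lattice_shiftD _ k => i.
by exists i; rewrite lattice_shift_delta.
Qed.

Variables (M : 'M[int]_m) (al : R) (hal : 0 < al) (Rm : 'M[R[i]]_n).
Hypotheses (Ma : map_mx (fun x : int => x%:~R : R) M *m a = al *: a)
  (Mb : map_mx (fun x : int => x%:~R : R[i]) M *m b = b *m Rm)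
  (M_unit : M \in unitmx) (b_inj : forall c : 'cV_n, b *m c = 0 -> c = 0).

Local Notation G_M :=
  (gen_grp (fun f => f = g0 hal Rm \/ exists i, f = gi a b i)).

Lemma g0_lattice_shift k p :
  g0 hal Rm (lattice_shift k p) = lattice_shift (M^T *m k) (g0 hal Rm p).
Proof.
apply: Xsp_ext => /=; rewrite map_mxM -map_trmx.
  rewrite mulrDr -rmorphM mulmxA -trmx_mul Ma linearZ /=.
  by rewrite -scalemxAl [in RHS]mxE.
by rewrite mulmxDr !mulmxA -!trmx_mul Mb.
Qed.

Lemma Rm_unit : Rm \in unitmx.
Proof.
apply: intertwined_unitmx b_inj Mb.
rewrite unitmxE (det_map_mx (intr : {rmorphism int -> R[i]})).
by apply: rmorph_unit; rewrite -unitmxE.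
Qed.

Lemma g0_inv_subproof (w : UHP R) : 0 < complex.Im (al^-1%:C * val w).
Proof. by apply: UHP_scale; rewrite invr_gt0. Qed.

Definition g0_inv (p : Xsp R n) : Xsp R n :=
  (exist _ (al^-1%:C * val p.1) (g0_inv_subproof p.1), invmx Rm^T *m p.2).

Lemma g0K : cancel (g0 hal Rm) g0_inv.
Proof.
move=> p; apply: Xsp_ext => /=; last by rewrite mulKmx ?unitmx_tr ?Rm_unit.
by rewrite mulrA -rmorphM mulVf ?mul1r // gt_eqF.
Qed.

Lemma g0_invK : cancel g0_inv (g0 hal Rm).
Proof.
move=> p; apply: Xsp_ext => /=; last by rewrite mulKVmx ?unitmx_tr ?Rm_unit.
by rewrite mulrA -rmorphM mulfV ?mul1r // gt_eqF.
Qed.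

Lemma G_M_lattice_shift k : G_M (lattice_shift k).
Proof.
apply: gen_grp_lattice_translation lattice_shift0 lattice_shiftD _ k => i.
by right; exists i; rewrite lattice_shift_delta.
Qed.

Lemma commutator_G_M_lattice_shift c :
  commutator_grp G_M c -> exists k, c = lattice_shift k.
Proof.
have psiK : cancel (fun k : 'cV_m => invmx M^T *m k) (mulmx M^T).
  by move=> k; rewrite mulKVmx ?unitmx_tr.
apply: (commutator_translation lattice_shift0 lattice_shiftD g0_lattice_shift psiK
          (can_inj g0K)) => _ [->|[i ->]].
  by exists 0, 1%N, 0%N => x; rewrite lattice_shift0.
by exists (delta_mx i 0), 0%N, 0%N => x; rewrite lattice_shift_delta.
Qed.

Lemma commutator_G_M_image e :
  commutator_grp G_M (lattice_shift ((M^T - 1%:M) *m e)).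
Proof.
rewrite mulmxBl mul1mx.
apply: (commutator_T_phi lattice_shift0 lattice_shiftD g0_lattice_shift _
         g0K g0_invK G_M_lattice_shift).
by apply: gen_grp_in; left.
Qed.

End Action.

Theorem corollary2p6 (R : realType) (n : nat) (M : 'M[int]_(2 * n + 1))
  (al : R) (a : 'cV[R]_(2 * n + 1)) (b : 'M[R[i]]_(2 * n + 1, n))
  (Rm : 'M[R[i]]_n) (hal : 0 < al) :
  let MC := map_mx (fun x : int => x%:~R : R[i]) M in
  let MR := map_mx (fun x : int => x%:~R : R) M in
  \det M = 1 ->
  (* alpha is an eigenvalue of M, the only real one, alpha > 0, alpha <> 1, simple *)
  eigenvalue MC al%:C ->
  (forall x : R, eigenvalue MC x%:C -> x = al) ->
  al != 1 ->
  mup al%:C (char_poly MC) = 1%N ->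
  (* a is a real eigenvector for alpha *)
  a != 0 -> MR *m a = al *: a ->
  (* columns b_1..b_n of b form a basis of W *)
  (forall j : 'I_n, inW MC (col j b)) ->
  (forall c : 'cV[R[i]]_n, b *m c = 0 -> c = 0) ->
  (forall v, inW MC v -> exists c : 'cV[R[i]]_n, v = b *m c) ->
  (* R = (r_lj) with M b_j = sum_l r_lj b_l *)
  MC *m b = b *m Rm ->
  let GM := gen_grp (fun f => f = g0 hal Rm \/ exists i, f = gi a b i) in
  let HM := gen_grp (fun f => exists i, f = gi a b i) in
  (forall c, commutator_grp GM c -> HM c) /\
  exists (k : nat) (reps : 'I_k -> (Xsp R n -> Xsp R n)),
    (forall j, HM (reps j)) /\
    forall h, HM h -> exists j, exists c, commutator_grp GM c /\ h = reps j \o c.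
Proof.
(* Besides det M = 1 and the absence of the eigenvalue 1, only the relations
   M a = al a, M b = b Rm and the injectivity of b are used; the spectral
   description of a and b plays no role. *)
move=> MC MR detM _ real_eig al_neq1 _ _ Ma _ b_inj _ Mb GM HM.
have M_unit : M \in unitmx by rewrite unitmxE detM unitr1.
have no_eig1 : ~~ eigenvalue MC 1.
  by apply/negP => /(real_eig 1) al1; rewrite al1 eqxx in al_neq1.
have detMT1 : \det (M^T - 1%:M) != 0.
  by rewrite -trmx1 -linearB det_tr (int_mx_det_subr1_neq0 no_eig1).
have [K [r rP]] := int_mx_image_finite_index detMT1.
split=> [c /(commutator_G_M_lattice_shift Ma Mb M_unit b_inj) [k ->]|].
  by apply/H_M_lattice_shiftE; exists k.
exists K, (fun j => lattice_shift a b (r j)).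
split=> [j|_ /H_M_lattice_shiftE [k ->]].
  by apply/H_M_lattice_shiftE; exists (r j).
have [j [e ->]] := rP k; exists j, (lattice_shift a b ((M^T - 1%:M) *m e)).
by rewrite lattice_shiftD; split=> //; apply: commutator_G_M_image.
Qed.
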